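(* For every $\Gamma\cup\{\varphi\}\subseteq{\bf F}(\Sigma,\mathcal{V})$: $\Gamma\vdash_{C_1}\varphi$ iff $\Gamma\vDash^{\mathsf{RN}}_{\mathcal{RM}_{C_1}}\varphi$.
   Context: $\Sigma$ has unary $\neg$ and binary $\wedge,\vee,\to$; ${\bf F}(\Sigma,\mathcal{V})$ its formulas over a denumerable set $\mathcal{V}$ of variables. Abbreviations: $\alpha^0=\alpha$, $\alpha^{k+1}=\neg(\alpha^k\wedge\neg\alpha^k)$; $\alpha^{(1)}=\alpha^1$, $\alpha^{(k+1)}=\alpha^{(k)}\wedge\alpha^{k+1}$. For $n\ge1$, $C_n$ is the Hilbert calculus with Modus Ponens and axiom schemata: $\alpha\to(\beta\to\alpha)$; $(\alpha\to(\beta\to\gamma))\to((\alpha\to\beta)\to(\alpha\to\gamma))$; $\alpha\to(\beta\to(\alpha\wedge\beta))$; $(\alpha\wedge\beta)\to\alpha$; $(\alpha\wedge\beta)\to\beta$; $\alpha\to(\alpha\vee\beta)$; $\beta\to(\alpha\vee\beta)$; $(\alpha\to\gamma)\to((\beta\to\gamma)\to((\alpha\vee\beta)\to\gamma))$; $\alpha\vee\neg\alpha$; $\neg\neg\alpha\to\alpha$; (bc$_n$) $\alpha^{(n)}\to(\alpha\to(\neg\alpha\to\beta))$; (P$_n$) $(\alpha^{(n)}\wedge\beta^{(n)})\to((\alpha\wedge\beta)^{(n)}\wedge(\alpha\vee\beta)^{(n)}\wedge(\alpha\to\beta)^{(n)})$. $\mathcal{A}_{C_1}$ is the $\Sigma$-multialgebra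 with universe $\{F,t,T\}$, $D=\{t,T\}$, and: $F\tilde\vee F=\{F\}$, $F\tilde\vee T=T\tilde\vee F=T\tilde\vee T=\{T\}$, $x\tilde\vee y=D$ whenever $t\in\{x,y\}$; $x\tilde\wedge y=\{F\}$ if $F\in\{x,y\}$, $T\tilde\wedge T=\{T\}$, $t\tilde\wedge t=t\tilde\wedge T=T\tilde\wedge t=D$; $\tilde\neg F=\{T\}$, $\tilde\neg t=D$, $\tilde\neg T=\{F\}$; $F\tilde\to F=F\tilde\to T=T\tilde\to T=\{T\}$, $t\tilde\to F=T\tilde\to F=\{F\}$, $x\tilde\to t=D$ for all $x$, $t\tilde\to T=D$. A valuation is a map $\nu$ with $\nu(\neg\alpha)\in\tilde\neg\nu(\alpha)$ and $\nu(\alpha\#\beta)\in\nu(\alpha)\tilde\#\nu(\beta)$. $\mathcal{F}_{C_1}$ is the set of valuations with $\nu(\alpha)=t\Rightarrow\nu(\alpha\wedge\neg\alpha)=T$ for all $\alpha$. $\mathcal{RM}_{C_1}=(\mathcal{A}_{C_1},D,\mathcal{F}_{C_1})$; $\Gamma\vDash^{\mathsf{RN}}_{\mathcal{RM}_{C_1}}\varphi$ iff every $\nu\in\mathcal{F}_{C_1}$ with $\nu[\Gamma]\subseteq D$ has $\nu(\varphi)\in D$. *)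

Inductive form : Type :=
| Var : nat -> form
| Neg : form -> form
| And : form -> form -> form
| Or  : form -> form -> form
| Imp : form -> form -> form.

Fixpoint circ (k : nat) (a : form) : form :=
  match k with
  | O => a
  | S k' => Neg (And (circ k' a) (Neg (circ k' a)))
  end.

Fixpoint circs (k : nat) (a : form) : form :=
  match k with
  | O => circ 1 a            (* unused: only k >= 1 is meaningful *)
  | S O => circ 1 a
  | S k' => And (circs k' a) (circ k a)
  end.

Inductive Cn_axiom (n : nat) : form -> Prop :=
| ax1 a b : Cn_axiom n (Imp a (Imp b a))
| ax2 a b c : Cn_axiom n (Imp (Imp a (Imp b c)) (Imp (Imp a b) (Imp a c)))
| ax3 a b : Cn_axiom n (Imp a (Imp b (And a b)))
| ax4 a b : Cn_axiom n (Imp (And a b) a)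
| ax5 a b : Cn_axiom n (Imp (And a b) b)
| ax6 a b : Cn_axiom n (Imp a (Or a b))
| ax7 a b : Cn_axiom n (Imp b (Or a b))
| ax8 a b c : Cn_axiom n (Imp (Imp a c) (Imp (Imp b c) (Imp (Or a b) c)))
| ax9 a : Cn_axiom n (Or a (Neg a))
| ax10 a : Cn_axiom n (Imp (Neg (Neg a)) a)
| axbc a b : Cn_axiom n (Imp (circs n a) (Imp a (Imp (Neg a) b)))
| axP a b : Cn_axiom n
    (Imp (And (circs n a) (circs n b))
         (And (And (circs n (And a b)) (circs n (Or a b))) (circs n (Imp a b)))).

Inductive derivable (n : nat) (Gamma : form -> Prop) : form -> Prop :=
| d_prem a : Gamma a -> derivable n Gamma a
| d_ax a : Cn_axiom n a -> derivable n Gamma a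
| d_mp a b : derivable n Gamma a -> derivable n Gamma (Imp a b) -> derivable n Gamma b.

Inductive V3 : Type := vF | vt | vT.

Definition designated (x : V3) : Prop := x = vt \/ x = vT.

(* Multioperations, as sets of values (predicates) *)
Definition mor (x y z : V3) : Prop :=
  match x, y with
  | vt, _ | _, vt => designated z
  | vF, vF => z = vF
  | _, _ => z = vT
  end.

Definition mand (x y z : V3) : Prop :=
  match x, y with
  | vF, _ | _, vF => z = vF
  | vT, vT => z = vT
  | _, _ => designated z
  end.

Definition mneg (x z : V3) : Prop :=
  match x with
  | vF => z = vT
  | vt => designated z
  | vT => z = vF
  end.

Definition mimp (x y z : V3) : Prop :=
  match x, y with
  | _, vt => designated z
  | vt, vT => designated z
  | vF, _ => z = vT
  | vT, vT => z = vT
  | _, vF => z = vF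
  end.

Definition valuation (v : form -> V3) : Prop :=
  forall a b,
    mneg (v a) (v (Neg a)) /\
    mand (v a) (v b) (v (And a b)) /\
    mor (v a) (v b) (v (Or a b)) /\
    mimp (v a) (v b) (v (Imp a b)).

Definition F_C1 (v : form -> V3) : Prop :=
  valuation v /\ forall a, v a = vt -> v (And a (Neg a)) = vT.

Definition RN_consequence (Gamma : form -> Prop) (phi : form) : Prop :=
  forall v, F_C1 v -> (forall g, Gamma g -> designated (v g)) -> designated (v phi).

From Stdlib Require Import Classical ClassicalEpsilon Lia Cantor.

(* The multioperations of A_{C_1} are first described uniformly: on the
   designated/undesignated split every connective behaves classically, and
   the "classical" values F, T are closed under the binary connectives,
   while t is the only value on which negation is non-deterministic.

   Soundness: for a restricted valuation, designatedness of alpha^1 means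
   exactly that alpha does not take the value t; with this, every axiom of
   C_1 is designated, and MP preserves designatedness.

   Completeness (Lindenbaum-Asser style): a non-derivable phi extends Gamma
   to a phi-saturated set Delta (maximal among those not deriving phi).
   Delta is closed under derivation and reflects the connectives, and the
   canonical valuation (F outside Delta, t if both alpha and ~alpha lie in
   Delta, T otherwise) is a restricted valuation designating exactly
   Delta, which refutes Gamma |= phi. *)

Definition extend (Gamma : form -> Prop) (a : form) : form -> Prop :=
  fun x => Gamma x \/ x = a.

Lemma mand_spec x y z :
  mand x y z <->
  (designated z <-> designated x /\ designated y) /\ (x <> vt -> y <> vt -> z <> vt).
Proof. destruct x, y, z; simpl; unfold designated; firstorder discriminate. Qed.

Lemma mor_spec x y z :
  mor x y z <->
  (designated z <-> designated x \/ designated y) /\ (x <> vt -> y <> vt -> z <> vt).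
Proof. destruct x, y, z; simpl; unfold designated; firstorder discriminate. Qed.

Lemma mimp_spec x y z :
  mimp x y z <->
  (designated z <-> (designated x -> designated y)) /\ (x <> vt -> y <> vt -> z <> vt).
Proof. destruct x, y, z; simpl; unfold designated; firstorder discriminate. Qed.

Lemma mneg_spec x z :
  mneg x z <->
  (x = vt -> designated z) /\ (x <> vt -> (designated z <-> ~ designated x) /\ z <> vt).
Proof. destruct x, z; simpl; unfold designated; firstorder discriminate. Qed.

Lemma designated_not_t x : designated x -> x <> vt -> x = vT.
Proof. unfold designated; tauto. Qed.

Section Soundness.
Variable v : form -> V3.
Hypothesis v_restricted : F_C1 v.

Lemma sound_and a b :
  (designated (v (And a b)) <-> designated (v a) /\ designated (v b)) /\
  (v a <> vt -> v b <> vt -> v (And a b) <> vt).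
Proof. apply mand_spec, (proj1 v_restricted a b). Qed.

Lemma sound_or a b :
  (designated (v (Or a b)) <-> designated (v a) \/ designated (v b)) /\
  (v a <> vt -> v b <> vt -> v (Or a b) <> vt).
Proof. apply mor_spec, (proj1 v_restricted a b). Qed.

Lemma sound_imp a b :
  (designated (v (Imp a b)) <-> (designated (v a) -> designated (v b))) /\
  (v a <> vt -> v b <> vt -> v (Imp a b) <> vt).
Proof. apply mimp_spec, (proj1 v_restricted a b). Qed.

Lemma sound_neg a :
  (v a = vt -> designated (v (Neg a))) /\
  (v a <> vt -> (designated (v (Neg a)) <-> ~ designated (v a)) /\ v (Neg a) <> vt).
Proof. apply mneg_spec, (proj1 v_restricted a a). Qed.

(* The consistency operator alpha^1 = ~(alpha /\ ~alpha) is designated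
   exactly when alpha is not inconsistent (value t); the restriction of
   F_C1 is what makes alpha /\ ~alpha take value T when alpha is t. *)
Lemma sound_circ a : designated (v (circ 1 a)) <-> v a <> vt.
Proof.
  cbn [circ].
  destruct (sound_neg (And a (Neg a))) as [_ neg_conj].
  destruct (classic (v a = vt)) as [Ht | Hnt].
  - rewrite (proj2 v_restricted a Ht) in neg_conj.
    destruct (neg_conj ltac:(discriminate)) as [Hiff _].
    rewrite Hiff; unfold designated; intuition discriminate.
  - destruct (proj2 (sound_neg a) Hnt) as [Hneg Hneg_nt].
    destruct (sound_and a (Neg a)) as [Hconj Hconj_nt].
    destruct (neg_conj (Hconj_nt Hnt Hneg_nt)) as [Hiff _].
    rewrite Hiff, Hconj, Hneg; tauto.
Qed.

Lemma axiom_sound a : Cn_axiom 1 a -> designated (v a).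
Proof.
  destruct 1; cbn [circs];
    repeat (rewrite (proj1 (sound_imp _ _)) || rewrite (proj1 (sound_and _ _))
            || rewrite (proj1 (sound_or _ _)) || rewrite sound_circ); try tauto.
  - (* alpha \/ ~alpha *)
    destruct (classic (v a = vt)) as [Ht | Hnt].
    + right; exact (proj1 (sound_neg a) Ht).
    + rewrite (proj1 (proj2 (sound_neg a) Hnt)); tauto.
  - (* ~~alpha -> alpha *)
    destruct (classic (v a = vt)) as [Ht | Hnt].
    + rewrite Ht; intros _; left; reflexivity.
    + destruct (proj2 (sound_neg a) Hnt) as [Hneg Hneg_nt].
      rewrite (proj1 (proj2 (sound_neg (Neg a)) Hneg_nt)), Hneg; tauto.
  - (* bc_1 *)
    intros Hnt Ha Hna. exfalso.
    rewrite (proj1 (proj2 (sound_neg a) Hnt)) in Hna; tauto.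
  - (* P_1 *)
    intros [Ha Hb].
    repeat split; [apply sound_and | apply sound_or | apply sound_imp]; assumption.
Qed.

End Soundness.

Theorem soundness Gamma phi : derivable 1 Gamma phi -> RN_consequence Gamma phi.
Proof.
  intros D v Hv HGamma. induction D as [a Ha | a Ha | a b _ IHa _ IHab].
  - exact (HGamma a Ha).
  - exact (axiom_sound v Hv a Ha).
  - exact (proj1 (proj1 (sound_imp v Hv a b)) IHab IHa).
Qed.

Section Calculus.
Variable n : nat.

Lemma derivable_mono (Gamma Delta : form -> Prop) a :
  (forall x, Gamma x -> Delta x) -> derivable n Gamma a -> derivable n Delta a.
Proof.
  intros Hsub D; induction D as [c Hc | c Hc | c d _ IHc _ IHcd].
  - apply d_prem; auto.
  - apply d_ax; auto.
  - exact (d_mp _ _ _ _ IHc IHcd).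
Qed.

Lemma derivable_id Gamma a : derivable n Gamma (Imp a a).
Proof.
  apply (d_mp _ _ (Imp a (Imp a a))); [apply d_ax, ax1 |].
  apply (d_mp _ _ (Imp a (Imp (Imp a a) a))); [apply d_ax, ax1 |].
  apply d_ax, ax2.
Qed.

Lemma deduction Gamma a b :
  derivable n (extend Gamma a) b -> derivable n Gamma (Imp a b).
Proof.
  intros D; induction D as [c [Hc | ->] | c Hc | c d _ IHc _ IHcd].
  - apply (d_mp _ _ c); [apply d_prem; auto | apply d_ax, ax1].
  - apply derivable_id.
  - apply (d_mp _ _ c); [apply d_ax; auto | apply d_ax, ax1].
  - apply (d_mp _ _ (Imp a c)); [exact IHc |].
    apply (d_mp _ _ (Imp a (Imp c d))); [exact IHcd | apply d_ax, ax2].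
Qed.

(* Derivations are finite: anything derivable from the union of an
   increasing chain of sets is derivable from one of its members. *)
Lemma derivable_chain (S : nat -> form -> Prop) a :
  (forall k x, S k x -> S (Datatypes.S k) x) ->
  derivable n (fun x => exists k, S k x) a -> exists k, derivable n (S k) a.
Proof.
  intros Hstep.
  assert (Hle : forall k l x, k <= l -> S k x -> S l x) by (induction 1; auto).
  induction 1 as [c [k Hc] | c Hc | c d _ [k1 D1] _ [k2 D2]].
  - exists k; apply d_prem; exact Hc.
  - exists 0; apply d_ax; exact Hc.
  - exists (max k1 k2). apply (d_mp _ _ c).
    + eapply derivable_mono; [| exact D1]. intros x; apply Hle; lia.
    + eapply derivable_mono; [| exact D2]. intros x; apply Hle; lia.
Qed.

End Calculus.

Fixpoint code (f : form) : nat :=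
  match f with
  | Var i => to_nat (0, i)
  | Neg a => to_nat (1, code a)
  | And a b => to_nat (2, to_nat (code a, code b))
  | Or a b => to_nat (3, to_nat (code a, code b))
  | Imp a b => to_nat (4, to_nat (code a, code b))
  end.

Lemma to_nat_inj p q : to_nat p = to_nat q -> p = q.
Proof. intros H. rewrite <- (cancel_of_to p), <- (cancel_of_to q), H. reflexivity. Qed.

Lemma code_inj f g : code f = code g -> f = g.
Proof.
  revert g; induction f; destruct g; cbn [code]; intros H; apply to_nat_inj in H;
    try discriminate; apply (f_equal snd) in H; cbn [snd] in H;
    try (f_equal; auto; fail).
  apply to_nat_inj in H; injection H as H1 H2; f_equal; auto.
  all: apply to_nat_inj in H; injection H as H1 H2; f_equal; auto.
Qed.

Definition saturated (n : nat) (phi : form) (Delta : form -> Prop) : Prop :=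
  ~ derivable n Delta phi /\ forall a, ~ Delta a -> derivable n (extend Delta a) phi.

Section Lindenbaum.
Variables (n : nat) (Gamma : form -> Prop) (phi : form).
Hypothesis not_derivable : ~ derivable n Gamma phi.

Fixpoint stage (k : nat) : form -> Prop :=
  match k with
  | O => Gamma
  | S k => fun x => stage k x \/ (code x = k /\ ~ derivable n (extend (stage k) x) phi)
  end.

Lemma stage_not_derivable k : ~ derivable n (stage k) phi.
Proof.
  induction k as [| k IHk]; [exact not_derivable |]. intros D.
  destruct (classic (exists x, code x = k /\ ~ derivable n (extend (stage k) x) phi))
    as [[x [Hx Nx]] | Nnew].
  - apply Nx. eapply derivable_mono; [| exact D].
    intros y [Hy | [Hy _]]; [left; exact Hy | right; apply code_inj; congruence].
  - apply IHk. eapply derivable_mono; [| exact D].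
    intros y [Hy | Hnew]; [exact Hy | exfalso; eauto].
Qed.

Lemma lindenbaum :
  exists Delta, (forall x, Gamma x -> Delta x) /\ saturated n phi Delta.
Proof.
  exists (fun x => exists k, stage k x). repeat split.
  - intros x Hx; exists 0; exact Hx.
  - intros D. destruct (derivable_chain n stage phi (fun k x H => or_introl H) D) as [k Dk].
    exact (stage_not_derivable k Dk).
  - intros a Na. apply NNPP; intros Da. apply Na. exists (S (code a)). right. split; [reflexivity |].
    contradict Da. eapply derivable_mono; [| exact Da].
    intros y [Hy | Hy]; [left; eauto | right; exact Hy].
Qed.

End Lindenbaum.

Section SaturatedCn.
Variables (n : nat) (phi : form) (Delta : form -> Prop).
Hypothesis Delta_saturated : saturated n phi Delta.

Lemma sat_outside a : ~ Delta a -> derivable n Delta (Imp a phi).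
Proof. intros Na; apply deduction, (proj2 Delta_saturated), Na. Qed.

Lemma sat_closed a : derivable n Delta a -> Delta a.
Proof.
  intros D. apply NNPP; intros Na. apply (proj1 Delta_saturated).
  exact (d_mp _ _ _ _ D (sat_outside a Na)).
Qed.

Lemma sat_axiom a : Cn_axiom n a -> Delta a.
Proof. intros; apply sat_closed, d_ax; auto. Qed.

Lemma sat_mp a b : Delta a -> Delta (Imp a b) -> Delta b.
Proof. intros Ha Hab; apply sat_closed; apply (d_mp _ _ a); apply d_prem; auto. Qed.

Lemma sat_and a b : Delta (And a b) <-> Delta a /\ Delta b.
Proof.
  split.
  - intros H; split; apply (sat_mp (And a b)); auto; apply sat_axiom; constructor.
  - intros [Ha Hb]. apply (sat_mp b); [exact Hb |].
    apply (sat_mp a); [exact Ha | apply sat_axiom, ax3].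
Qed.

Lemma sat_or a b : Delta (Or a b) <-> Delta a \/ Delta b.
Proof.
  split.
  - intros H. apply NNPP; intros N. apply (proj1 Delta_saturated).
    apply (d_mp _ _ (Or a b)); [apply d_prem, H |].
    apply (d_mp _ _ (Imp b phi)); [apply sat_outside; tauto |].
    apply (d_mp _ _ (Imp a phi)); [apply sat_outside; tauto | apply d_ax, ax8].
  - intros [H | H]; [apply (sat_mp a) | apply (sat_mp b)]; auto; apply sat_axiom; constructor.
Qed.

Lemma sat_excluded_middle a : Delta a \/ Delta (Neg a).
Proof. apply sat_or, sat_axiom, ax9. Qed.

Lemma sat_double_neg a : Delta (Neg (Neg a)) -> Delta a.
Proof. intros H; apply (sat_mp (Neg (Neg a))); [exact H | apply sat_axiom, ax10]. Qed.

End SaturatedCn.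

Section SaturatedC1.
Variables (phi : form) (Delta : form -> Prop).
Hypothesis Delta_saturated : saturated 1 phi Delta.

Lemma sat_circ a : Delta (circ 1 a) <-> ~ (Delta a /\ Delta (Neg a)).
Proof.
  split.
  - intros Hc [Ha Hna]. apply (proj1 Delta_saturated).
    apply (d_mp _ _ (Neg a)); [apply d_prem, Hna |].
    apply (d_mp _ _ a); [apply d_prem, Ha |].
    apply (d_mp _ _ (circ 1 a)); [apply d_prem, Hc | apply d_ax, (axbc 1 a phi)].
  - intros N. destruct (sat_excluded_middle _ _ _ Delta_saturated (circ 1 a)) as [H | H];
      [exact H |].
    apply (sat_double_neg _ _ _ Delta_saturated), (sat_and _ _ _ Delta_saturated) in H.
    contradiction.
Qed.

(* Implication is classical in Delta: if alpha is missing then ~alpha and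
   alpha^1 are present, and bc_1 yields alpha -> beta by deduction. *)
Lemma sat_imp a b : Delta (Imp a b) <-> (Delta a -> Delta b).
Proof.
  split; [intros Hab Ha; exact (sat_mp _ _ _ Delta_saturated a b Ha Hab) |].
  intros H. destruct (classic (Delta a)) as [Ha | Na].
  - eapply (sat_mp _ _ _ Delta_saturated); [exact (H Ha) |].
    apply (sat_axiom _ _ _ Delta_saturated), ax1.
  - assert (Hna : Delta (Neg a))
      by (destruct (sat_excluded_middle _ _ _ Delta_saturated a); tauto).
    assert (Hc : Delta (circ 1 a)) by (apply sat_circ; tauto).
    apply (sat_closed _ _ _ Delta_saturated), deduction.
    apply (d_mp _ _ (Neg a)); [apply d_prem; left; exact Hna |].
    apply (d_mp _ _ a); [apply d_prem; right; reflexivity |].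
    apply (d_mp _ _ (circ 1 a)); [apply d_prem; left; exact Hc | apply d_ax, (axbc 1 a b)].
Qed.

Lemma sat_propagation a b :
  Delta (circ 1 a) -> Delta (circ 1 b) ->
  Delta (circ 1 (And a b)) /\ Delta (circ 1 (Or a b)) /\ Delta (circ 1 (Imp a b)).
Proof.
  intros Ha Hb.
  assert (H : Delta (And (And (circs 1 (And a b)) (circs 1 (Or a b))) (circs 1 (Imp a b)))).
  { eapply (sat_mp _ _ _ Delta_saturated); [| apply (sat_axiom _ _ _ Delta_saturated), axP].
    apply (sat_and _ _ _ Delta_saturated); split; assumption. }
  rewrite !(sat_and _ _ _ Delta_saturated) in H. cbn [circs] in H. tauto.
Qed.

Definition canonical (a : form) : V3 :=
  if excluded_middle_informative (Delta a) then
    if excluded_middle_informative (Delta (Neg a)) then vt else vT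
  else vF.

Lemma canonical_designated a : designated (canonical a) <-> Delta a.
Proof.
  unfold canonical, designated.
  repeat destruct excluded_middle_informative; intuition discriminate.
Qed.

Lemma canonical_t a : canonical a = vt <-> Delta a /\ Delta (Neg a).
Proof.
  unfold canonical.
  repeat destruct excluded_middle_informative; intuition discriminate.
Qed.

Lemma canonical_not_t a : canonical a <> vt <-> Delta (circ 1 a).
Proof. rewrite sat_circ, canonical_t; tauto. Qed.

(* The canonical valuation respects each multioperation: designatedness
   follows the classical behaviour of Delta, and consistency (value other
   than t) propagates by P_1. *)
Lemma canonical_neg a : mneg (canonical a) (canonical (Neg a)).
Proof.
  rewrite mneg_spec, !canonical_designated, !canonical_not_t, canonical_t, !sat_circ.
  pose proof (sat_excluded_middle _ _ _ Delta_saturated a).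
  pose proof (sat_double_neg _ _ _ Delta_saturated a).
  tauto.
Qed.

Lemma canonical_and a b : mand (canonical a) (canonical b) (canonical (And a b)).
Proof.
  rewrite mand_spec, !canonical_designated, !canonical_not_t, (sat_and _ _ _ Delta_saturated).
  split; [tauto | intros Ha Hb; apply (sat_propagation a b Ha Hb)].
Qed.

Lemma canonical_or a b : mor (canonical a) (canonical b) (canonical (Or a b)).
Proof.
  rewrite mor_spec, !canonical_designated, !canonical_not_t, (sat_or _ _ _ Delta_saturated).
  split; [tauto | intros Ha Hb; apply (sat_propagation a b Ha Hb)].
Qed.

Lemma canonical_imp a b : mimp (canonical a) (canonical b) (canonical (Imp a b)).
Proof.
  rewrite mimp_spec, !canonical_designated, !canonical_not_t, sat_imp.
  split; [tauto | intros Ha Hb; apply (sat_propagation a b Ha Hb)].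
Qed.

Lemma canonical_restricted : F_C1 canonical.
Proof.
  split.
  - intros a b; auto using canonical_neg, canonical_and, canonical_or, canonical_imp.
  - intros a Ht. apply canonical_t in Ht. apply designated_not_t.
    + apply canonical_designated, (sat_and _ _ _ Delta_saturated); tauto.
    + (* (a /\ ~a)^1 lies in Delta, while its negation a^1 does not *)
      rewrite canonical_not_t, sat_circ. intros [_ Hc].
      exact (proj1 (sat_circ a) Hc Ht).
Qed.

End SaturatedC1.

Theorem completeness Gamma phi : RN_consequence Gamma phi -> derivable 1 Gamma phi.
Proof.
  intros Hcons. apply NNPP; intros not_derivable.
  destruct (lindenbaum 1 Gamma phi not_derivable) as [Delta [HGamma Hsat]].
  apply (proj1 Hsat), d_prem, (canonical_designated Delta).
  apply Hcons; [exact (canonical_restricted phi Delta Hsat) |].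
  intros g Hg; apply canonical_designated, HGamma, Hg.
Qed.

Theorem mainTheorem9 : forall (Gamma : form -> Prop) (phi : form),
  derivable 1 Gamma phi <-> RN_consequence Gamma phi.
Proof.
  intros Gamma phi. split; [apply soundness | apply completeness].
Qed.
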